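(* If $\mathcal{M}_\times\perp\Sigma$ and $\mathcal{M}_\Sigma\perp E$, then $\mathcal{M}_\times\perp\mathsf{L}E$.
   Context: $\mathcal{E}$ is a locally cartesian closed category with a dominance: a class of monos (the $\Sigma$-monos) closed under pullback, identities and composition, classified by $\top:1\to\Sigma$ (each $\Sigma$-mono $U\to A$ is the pullback of $\top$ along a unique $A\to\Sigma$). $\mathsf{L}E=\sum_{\phi:\Sigma}E^{\phi}$ is the associated partial map classifier: maps $X\to\mathsf{L}E$ correspond to pairs of a $\Sigma$-mono $U\to X$ and a map $U\to E$. For a mono $m:I\to J$ and an object $E$, $m\perp E$ means every map $I\to E$ extends uniquely along $m$ to a map $J\to E$; for a class $\mathcal{N}$, $\mathcal{N}\perp E$ means $m\perp E$ for all $m\in\mathcal{N}$. Given a class $\mathcal{M}$ of monos, $\mathcal{M}_\times$ is the smallest class of monos containing $\mathcal{M}$ and stable under products (with arbitrary objects), and $\mathcal{M}_\Sigma$ is the smallest class of monos containing $\mathcal{M}_\times$ and stable under pullback along $\Sigma$-monos. *)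

Set Implicit Arguments.
Unset Strict Implicit.

Record Cat := {
  ob :> Type;
  hom : ob -> ob -> Type;
  idm : forall a, hom a a;
  cmp : forall a b c, hom b c -> hom a b -> hom a c;
  cmp_idl : forall a b (f : hom a b), cmp (idm b) f = f;
  cmp_idr : forall a b (f : hom a b), cmp f (idm a) = f;
  cmp_assoc : forall a b c d (f : hom c d) (g : hom b c) (h : hom a b),
      cmp f (cmp g h) = cmp (cmp f g) h
}.

Arguments hom {_} _ _.
Arguments idm {_} _.
Arguments cmp {_ _ _ _} _ _.
Notation "f \o g" := (cmp f g) (at level 40, left associativity).

Section Notions.
Variable C : Cat.

Definition mono {A B : C} (f : hom A B) : Prop :=
  forall (Z : C) (g h : hom Z A), f \o g = f \o h -> g = h.

Definition is_terminal (T : C) : Prop :=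
  forall X : C, exists t : hom X T, forall t' : hom X T, t' = t.

Definition is_pullback {A B D : C} (f : hom A D) (g : hom B D)
    (P : C) (p1 : hom P A) (p2 : hom P B) : Prop :=
  f \o p1 = g \o p2 /\
  forall (Z : C) (x : hom Z A) (y : hom Z B), f \o x = g \o y ->
    exists! k : hom Z P, p1 \o k = x /\ p2 \o k = y.

Definition is_product (A B P : C) (p1 : hom P A) (p2 : hom P B) : Prop :=
  forall (Z : C) (x : hom Z A) (y : hom Z B),
    exists! k : hom Z P, p1 \o k = x /\ p2 \o k = y.

(** Dependent product (right adjoint to pullback along [f : A -> B]) of
    [p : X -> A]: an object [q : P -> B] over [B], a pullback square
    [Q] of [q] along [f], and an evaluation [ev : Q -> X] over [A], which
    is universal: every map [f^* r -> p] over [A] corresponds to a unique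
    map [r -> q] over [B]. *)
Definition is_dprod {A B X : C} (f : hom A B) (p : hom X A)
    (P : C) (q : hom P B) (Q : C) (qP : hom Q P) (qA : hom Q A)
    (ev : hom Q X) : Prop :=
  is_pullback q f qP qA /\ p \o ev = qA /\
  forall (Z : C) (r : hom Z B) (W : C) (w1 : hom W Z) (w2 : hom W A),
    is_pullback r f w1 w2 ->
    forall g : hom W X, p \o g = w2 ->
    exists! h : hom Z P, q \o h = r /\
      (forall k : hom W Q, qP \o k = h \o w1 -> qA \o k = w2 -> ev \o k = g).

Definition lccc : Prop :=
  (forall (A B D : C) (f : hom A D) (g : hom B D),
      exists (P : C) (p1 : hom P A) (p2 : hom P B), is_pullback f g p1 p2) /\
  (forall (A B X : C) (f : hom A B) (p : hom X A),
      exists (P : C) (q : hom P B) (Q : C) (qP : hom Q P) (qA : hom Q A)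
             (ev : hom Q X), is_dprod f p q qP qA ev).

Definition mclass := forall A B : C, hom A B -> Prop.

(** A dominance: the class [Dm] of Sigma-monos, classified by [top]. *)
Record dominance (Dm : mclass) (one Sig : C) (top : hom one Sig) : Prop := {
  dom_mono : forall (U A : C) (m : hom U A), Dm U A m -> mono m;
  dom_pb : forall (U A B P : C) (m : hom U A) (g : hom B A)
      (p1 : hom P U) (p2 : hom P B),
      Dm U A m -> is_pullback m g p1 p2 -> Dm P B p2;
  dom_id : forall A : C, Dm A A (idm A);
  dom_comp : forall (A B D : C) (m : hom B D) (n : hom A B),
      Dm B D m -> Dm A B n -> Dm A D (m \o n);
  dom_top : Dm one Sig top;
  dom_class : forall (U A : C) (m : hom U A), Dm U A m ->
      exists! chi : hom A Sig, exists u : hom U one, is_pullback top chi u m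
}.

Definition orth {I J : C} (m : hom I J) (E : C) : Prop :=
  forall f : hom I E, exists! g : hom J E, g \o m = f.

Definition class_orth (N : mclass) (E : C) : Prop :=
  forall (I J : C) (m : hom I J), N I J m -> orth m E.

(** [M_x]: the smallest class containing [M], stable under products with
    arbitrary objects (for any choice of product diagrams). *)
Inductive Mx (M : mclass) : mclass :=
  | Mx_base : forall (I J : C) (m : hom I J), M I J m -> Mx M m
  | Mx_prod : forall (I J X PI PJ : C) (m : hom I J)
      (a1 : hom PI I) (a2 : hom PI X) (b1 : hom PJ J) (b2 : hom PJ X)
      (k : hom PI PJ),
      Mx M m -> is_product a1 a2 -> is_product b1 b2 ->
      b1 \o k = m \o a1 -> b2 \o k = a2 -> Mx M k.

(** [M_Sigma]: the smallest class containing [M_x] and stable under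
    pullback along Sigma-monos (members of [Dm]). *)
Inductive MS (Dm : mclass) (M : mclass) : mclass :=
  | MS_x : forall (I J : C) (m : hom I J), Mx M m -> MS Dm M m
  | MS_pb : forall (I J V P : C) (m : hom I J) (n : hom V J)
      (p1 : hom P I) (p2 : hom P V),
      MS Dm M m -> Dm V J n -> is_pullback m n p1 p2 -> MS Dm M p2.

End Notions.

Arguments mono {C A B} f.
Arguments is_pullback {C A B D} f g {P} p1 p2.
Arguments is_product {C A B P} p1 p2.
Arguments is_dprod {C A B X} f p {P} q {Q} qP qA ev.
Arguments orth {C I J} m E.


(* Write L E as the dependent product [Pi_top (E -> 1)] of
   [E -> 1] along [top : 1 -> Sigma].  By the universal property, a map
   [h : Z -> L E] is determined by the composite [q o h : Z -> Sigma] together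
   with its "restriction" to the pullback of [q o h] along [top], a map from
   that pullback into [E]; conversely every such pair glues to a map.
   Given [m : I -> J] in [M_x] and [a : I -> L E], we first extend [q o a]
   along [m] to [phi : J -> Sigma] (as [M_x] is orthogonal to [Sigma]).
   Pulling [top] back along [phi] gives a Sigma-mono [n : V -> J], and pulling
   [m] back along [n] gives [p2 : P -> V], a member of [M_Sigma]; by pasting,
   [P] is also the pullback of [q o a] along [top].  The restriction of [a]
   to [P] extends uniquely along [p2] (as [M_Sigma] is orthogonal to [E]),
   and gluing it with [phi] yields the unique extension of [a] along [m]. *)

Section Pullbacks.
Context {C : Cat}.

Lemma pullback_sym {A B D : C} {f : hom A D} {g : hom B D}
    {P : C} {p1 : hom P A} {p2 : hom P B} :
  is_pullback f g p1 p2 -> is_pullback g f p2 p1.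
Proof.
  intros [Hc Hu]; split; [symmetry; exact Hc|].
  intros Z x y Hxy.
  destruct (Hu Z y x (eq_sym Hxy)) as [k [[H1 H2] Hk]].
  exists k; split; [split; assumption|].
  intros k' [H1' H2']; apply Hk; split; assumption.
Qed.

Lemma pullback_paste {I J V P S O : C} {phi : hom J S} {t : hom O S}
    {n : hom V J} {u : hom V O} {m : hom I J} {p1 : hom P I} {p2 : hom P V} :
  is_pullback phi t n u -> is_pullback m n p1 p2 ->
  is_pullback (phi \o m) t p1 (u \o p2).
Proof.
  intros [HVc HVu] [HPc HPu]; split.
  - rewrite <- cmp_assoc, HPc, cmp_assoc, HVc, cmp_assoc; reflexivity.
  - intros Z x y Hxy.
    assert (Hsq : phi \o (m \o x) = t \o y) by (rewrite cmp_assoc; exact Hxy).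
    destruct (HVu Z (m \o x) y Hsq) as [z [[Hz1 Hz2] Hzu]].
    destruct (HPu Z x z (eq_sym Hz1)) as [k [[Hk1 Hk2] Hku]].
    exists k; split.
    + split; [exact Hk1|]. rewrite <- cmp_assoc, Hk2; exact Hz2.
    + intros k' [H1 H2]. apply Hku; split; [exact H1|].
      symmetry; apply Hzu; split.
      * rewrite cmp_assoc, <- HPc, <- cmp_assoc, H1; reflexivity.
      * rewrite cmp_assoc; exact H2.
Qed.

Lemma terminal_hom_unique {T : C} :
  is_terminal T -> forall (Z : C) (x y : hom Z T), x = y.
Proof.
  intros HT Z x y; destruct (HT Z) as [t Ht]; rewrite (Ht x), (Ht y); reflexivity.
Qed.

End Pullbacks.

Section DependentProduct.
Context {C : Cat} {A B X : C} {t : hom A B} {p : hom X A}.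
Context {L : C} {q : hom L B} {Q : C} {qP : hom Q L} {qA : hom Q A}
  {ev : hom Q X}.
Hypothesis HL : is_dprod t p q qP qA ev.

Definition restricts_to {Z W : C} (h : hom Z L) (x : hom W Z) (y : hom W A)
    (g : hom W X) : Prop :=
  forall k : hom W Q, qP \o k = h \o x -> qA \o k = y -> ev \o k = g.

Lemma restricts_exists {Z W : C} {h : hom Z L} {x : hom W Z} {y : hom W A} :
  q \o (h \o x) = t \o y ->
  exists g : hom W X, restricts_to h x y g /\ p \o g = y.
Proof.
  destruct HL as [[_ HQu] [Hev _]]; intros Hsq.
  destruct (HQu W (h \o x) y Hsq) as [k [[Hk1 Hk2] Hku]].
  exists (ev \o k); split.
  - intros k' Hk1' Hk2'; rewrite (Hku k' (conj Hk1' Hk2')); reflexivity.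
  - rewrite cmp_assoc, Hev; exact Hk2.
Qed.

Lemma restricts_unique {Z W : C} {h : hom Z L} {x : hom W Z} {y : hom W A}
    {g1 g2 : hom W X} :
  q \o (h \o x) = t \o y ->
  restricts_to h x y g1 -> restricts_to h x y g2 -> g1 = g2.
Proof.
  destruct HL as [[_ HQu] _]; intros Hsq Hg1 Hg2.
  destruct (HQu W (h \o x) y Hsq) as [k [[Hk1 Hk2] _]].
  rewrite <- (Hg1 k Hk1 Hk2); exact (Hg2 k Hk1 Hk2).
Qed.

Lemma restricts_comp {Z W W' : C} (s : hom W' W) {h : hom Z L} {x : hom W Z}
    {y : hom W A} {g : hom W X} :
  q \o (h \o x) = t \o y -> restricts_to h x y g ->
  restricts_to h (x \o s) (y \o s) (g \o s).
Proof.
  destruct HL as [[_ HQu] _]; intros Hsq Hg k Hk1 Hk2.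
  destruct (HQu W (h \o x) y Hsq) as [k0 [[Hk01 Hk02] _]].
  destruct (HQu W' (h \o (x \o s)) (y \o s)) as [k1 [_ Hk1u]].
  { rewrite (cmp_assoc h x s), cmp_assoc, Hsq, cmp_assoc; reflexivity. }
  assert (Hk : k = k0 \o s).
  { transitivity k1; [symmetry|]; apply Hk1u; split; try assumption.
    - rewrite cmp_assoc, Hk01, cmp_assoc; reflexivity.
    - rewrite cmp_assoc, Hk02; reflexivity. }
  rewrite Hk, cmp_assoc, (Hg k0 Hk01 Hk02); reflexivity.
Qed.

Lemma restricts_to_cmp {Z Z' W : C} {h : hom Z L} {m : hom Z' Z}
    {x : hom W Z'} {y : hom W A} {g : hom W X} :
  restricts_to h (m \o x) y g -> restricts_to (h \o m) x y g.
Proof.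
  intros Hg k Hk1; apply Hg; rewrite Hk1, cmp_assoc; reflexivity.
Qed.

Lemma dprod_glue {Z W : C} {r : hom Z B} {w1 : hom W Z} {w2 : hom W A}
    (g : hom W X) :
  is_pullback r t w1 w2 -> p \o g = w2 ->
  exists h : hom Z L, q \o h = r /\ restricts_to h w1 w2 g.
Proof.
  destruct HL as [_ [_ HLu]]; intros Hpb Hg.
  destruct (HLu Z r W w1 w2 Hpb g Hg) as [h [Hh _]]; exists h; exact Hh.
Qed.

Lemma dprod_ext {Z W : C} {r : hom Z B} {w1 : hom W Z} {w2 : hom W A}
    {g : hom W X} {h1 h2 : hom Z L} :
  is_pullback r t w1 w2 -> p \o g = w2 ->
  q \o h1 = r -> restricts_to h1 w1 w2 g ->
  q \o h2 = r -> restricts_to h2 w1 w2 g -> h1 = h2.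
Proof.
  destruct HL as [_ [_ HLu]]; intros Hpb Hg Hq1 Hr1 Hq2 Hr2.
  destruct (HLu Z r W w1 w2 Hpb g Hg) as [h [_ Hhu]].
  transitivity h; [symmetry|]; apply Hhu; split; assumption.
Qed.

Lemma dprod_orth {I J : C} {m : hom I J} :
  (forall (Z : C) (x y : hom Z A), x = y) ->
  orth m B ->
  (forall phi : hom J B, exists (V : C) (n : hom V J) (u : hom V A)
      (P : C) (p1 : hom P I) (p2 : hom P V),
      is_pullback phi t n u /\ is_pullback m n p1 p2 /\ orth p2 X) ->
  orth m L.
Proof.
  intros HA Hm Hsplit a.
  destruct (Hm (q \o a)) as [phi [Hphi Hphi_u]].
  destruct (Hsplit phi) as (V & n & u & P & p1 & p2 & HV & HP & Hp2).
  pose proof HV as [HVc _]; pose proof HP as [HPc _].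
  assert (HPV : is_pullback (q \o a) t p1 (u \o p2))
    by (rewrite <- Hphi; exact (pullback_paste HV HP)).
  assert (HPa : q \o (a \o p1) = t \o (u \o p2))
    by (rewrite cmp_assoc; exact (proj1 HPV)).
  destruct (restricts_exists HPa) as [g0 [Hg0 _]].
  destruct (Hp2 g0) as [e [He He_u]].
  destruct (dprod_glue e HV (HA _ _ _)) as [h [Hh Hhe]].
  assert (HVh : q \o (h \o n) = t \o u) by (rewrite cmp_assoc, Hh; exact HVc).
  exists h; split.
  - (* [h o m] and [a] agree on [Sigma] and restrict to [g0] on [P]. *)
    apply (dprod_ext HPV (g := g0) (HA _ _ _)); [| | reflexivity | exact Hg0].
    + rewrite cmp_assoc, Hh; exact Hphi.
    + apply restricts_to_cmp; rewrite HPc, <- He.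
      exact (restricts_comp p2 HVh Hhe).
  - (* any extension [b] agrees with [h] on [Sigma] and restricts to [e]. *)
    intros b Hb.
    assert (Hqb : q \o b = phi)
      by (symmetry; apply Hphi_u; rewrite <- cmp_assoc, Hb; reflexivity).
    assert (HVb : q \o (b \o n) = t \o u) by (rewrite cmp_assoc, Hqb; exact HVc).
    destruct (restricts_exists HVb) as [g1 [Hg1 _]].
    assert (Hg1e : g1 = e).
    { symmetry; apply He_u; apply (restricts_unique HPa); [|exact Hg0].
      rewrite <- Hb; apply restricts_to_cmp; rewrite HPc.
      exact (restricts_comp p2 HVb Hg1). }
    subst g1; exact (dprod_ext HV (HA _ _ _) Hh Hhe Hqb Hg1).
Qed.

End DependentProduct.

Theorem mainTheorem10 (C : Cat) (HC : lccc C)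
    (Dm : mclass C) (one Sig : C) (top : hom one Sig)
    (Hone : is_terminal one) (Hdom : dominance Dm top)
    (M : mclass C) (HM : forall (I J : C) (m : hom I J), M I J m -> mono m)
    (E : C) (bang : hom E one)
    (* L E = sum_(phi : Sigma) E^phi = the dependent product of E -> 1 along top *)
    (LE : C) (q : hom LE Sig) (Q : C) (qP : hom Q LE) (qA : hom Q one)
    (ev : hom Q E) (HL : is_dprod top bang q qP qA ev) :
  class_orth (Mx M) Sig -> class_orth (MS Dm M) E -> class_orth (Mx M) LE.
Proof.
  intros Hsig HE I J m Hm.
  destruct HC as [Hpb _].
  apply (dprod_orth HL (terminal_hom_unique Hone) (Hsig I J m Hm)).
  intros phi.
  destruct (Hpb J one Sig phi top) as (V & n & u & HV).
  assert (Hn : Dm V J n)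
    by exact (dom_pb Hdom (dom_top Hdom) (pullback_sym HV)).
  destruct (Hpb I V J m n) as (P & p1 & p2 & HP).
  exists V, n, u, P, p1, p2.
  exact (conj HV (conj HP (HE P V p2 (MS_pb (MS_x Dm Hm) Hn HP)))).
Qed.
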